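(* Let $G$ be a mixed abelian group in which every subgroup is an essential subgroup of some direct summand of $G$. Then $G = D \oplus R$, where $D$ is a divisible group and $R$ is a reduced torsion-free group.
   Context: All groups are additively written abelian groups; a mixed group contains both non-zero elements of finite order and elements of infinite order. A subgroup $H$ of a group $A$ is essential in $A$ if $H \cap S \neq \{0\}$ for every non-zero subgroup $S$ of $A$. *)

(* an abelian group (possibly infinite) is a zmodType;
   subgroups are Prop-valued predicates closed under 0 and subtraction. *)
From mathcomp Require Import all_boot all_algebra.
Set Implicit Arguments. Unset Strict Implicit. Unset Printing Implicit Defensive.
Import GRing.Theory.
Local Open Scope ring_scope.

Section AbGroups.
Variable G : zmodType.

Definition is_subgroup (H : G -> Prop) : Prop :=
  H 0 /\ (forall x y, H x -> H y -> H (x - y)).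

Definition subset (A B : G -> Prop) : Prop := forall x, A x -> B x.

Definition internal_direct_sum (A B : G -> Prop) : Prop :=
  is_subgroup A /\ is_subgroup B /\
  (forall x, A x -> B x -> x = 0) /\
  (forall g, exists a b, A a /\ B b /\ g = a + b).

Definition direct_summand (S : G -> Prop) : Prop :=
  exists T : G -> Prop, internal_direct_sum S T.

Definition essential_in (H A : G -> Prop) : Prop :=
  is_subgroup H /\ is_subgroup A /\ subset H A /\
  (forall S : G -> Prop, is_subgroup S -> subset S A ->
     (exists s, S s /\ s <> 0) -> exists x, H x /\ S x /\ x <> 0).

Definition finite_order (x : G) : Prop := exists n : nat, (0 < n)%N /\ x *+ n = 0.

Definition mixed_group : Prop :=
  (exists x : G, x <> 0 /\ finite_order x) /\ (exists y : G, ~ finite_order y).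

Definition divisible (D : G -> Prop) : Prop :=
  forall d, D d -> forall n : nat, (0 < n)%N -> exists e, D e /\ e *+ n = d.

Definition reduced (R : G -> Prop) : Prop :=
  forall D : G -> Prop, is_subgroup D -> subset D R -> divisible D ->
    forall x, D x -> x = 0.

Definition torsion_free (R : G -> Prop) : Prop :=
  forall x, R x -> forall n : nat, (0 < n)%N -> x *+ n = 0 -> x = 0.

End AbGroups.

From Pilot Require Import Defs.
From mathcomp Require Import all_boot all_algebra.
Set Implicit Arguments. Unset Strict Implicit. Unset Printing Implicit Defensive.
Import GRing.Theory.
Local Open Scope ring_scope.

(* Let y have infinite order.  For a torsion element t and m > 0 the cyclic
   group <my + t> is torsion-free, so a summand S, G = S + C, in which it is
   essential meets the torsion subgroup T trivially; this forces T into C, and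
   then, writing y = s + c, the element my + t - ms = mc + t lies in S and C,
   so -c is an m-th root of t in T.  Thus T is divisible and lies in the
   maximal divisible subgroup D.  A summand S in which D is essential is D
   itself: a nonzero x in S has a multiple kx = ke with e in D, and x - e is
   torsion.  The complement of D is then reduced and torsion-free. *)

Section MixedGroups.
Variable G : zmodType.
Implicit Types (x y z : G) (A B H S C D : G -> Prop).

Lemma subgroup0 S : is_subgroup S -> S 0.
Proof. by case. Qed.

Lemma subgroupB S x y : is_subgroup S -> S x -> S y -> S (x - y).
Proof. by case=> _; apply. Qed.

Lemma subgroupN S x : is_subgroup S -> S x -> S (- x).
Proof. by move=> sS Sx; rewrite -sub0r; apply: subgroupB => //; apply: subgroup0. Qed.

Lemma subgroupD S x y : is_subgroup S -> S x -> S y -> S (x + y).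
Proof. by move=> sS Sx Sy; rewrite -[y]opprK; apply: subgroupB => //; apply: subgroupN. Qed.

Lemma subgroupMn S x n : is_subgroup S -> S x -> S (x *+ n).
Proof.
move=> sS Sx; elim: n => [|n IHn]; first by rewrite mulr0n; apply: subgroup0.
by rewrite mulrSr; apply: subgroupD.
Qed.

Lemma subgroupMz S x i : is_subgroup S -> S x -> S (x *~ i).
Proof. by move=> sS Sx; case: i => n /=; [|apply: subgroupN => //]; apply: subgroupMn. Qed.

Lemma subgroup_pm S x y : is_subgroup S -> S y -> x = y \/ x = - y -> S x.
Proof. by move=> sS Sy [->|->] //; apply: subgroupN. Qed.

Lemma finite_order_subgroup : is_subgroup (@finite_order G).
Proof.
split; first by exists 1%N; rewrite mul0rn.
move=> x y [n [n_gt0 xn0]] [m [m_gt0 ym0]]; exists (n * m)%N.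
by rewrite muln_gt0 n_gt0 mulrnBl mulrnA xn0 mul0rn mulnC mulrnA ym0 mul0rn subr0.
Qed.

Lemma finite_orderMn x k : (0 < k)%N -> finite_order (x *+ k) <-> finite_order x.
Proof.
move=> k_gt0; split=> [[n [n_gt0 xkn0]] | xtor]; last exact: subgroupMn finite_order_subgroup xtor.
by exists (k * n)%N; rewrite muln_gt0 k_gt0 mulrnA.
Qed.

Definition multiples x : G -> Prop := fun g => exists i : int, g = x *~ i.

Lemma multiples_subgroup x : is_subgroup (multiples x).
Proof.
split; first by exists 0; rewrite mulr0z.
by move=> _ _ [i ->] [j ->]; exists (i - j); rewrite mulrzBr.
Qed.

Lemma multiples_self x : multiples x x.
Proof. by exists 1; rewrite mulr1z. Qed.

Lemma multiples_min S x : is_subgroup S -> S x -> Defs.subset (multiples x) S.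
Proof. by move=> sS Sx _ [i ->]; apply: subgroupMz. Qed.

Lemma multiples_neq0 x h : multiples x h -> h != 0 ->
  exists2 k, (0 < k)%N & h = x *+ k \/ h = - (x *+ k).
Proof.
move=> [[[|n]|n] ->] h_neq0; first by rewrite mulr0z eqxx in h_neq0.
- by exists n.+1 => //; left.
- by exists n.+1 => //; right.
Qed.

Lemma multiples_torsion_free x : ~ finite_order x -> torsion_free (multiples x).
Proof.
move=> x_inf h xh n n_gt0 hn0; have [//|h_neq0] := eqVneq h 0.
have [k k_gt0 h_pm] := multiples_neq0 xh h_neq0.
have xk_pm : x *+ k = h \/ x *+ k = - h by case: h_pm => ->; [left | right; rewrite opprK].
case: x_inf; apply/(finite_orderMn x k_gt0).
by apply: subgroup_pm finite_order_subgroup _ xk_pm; exists n.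
Qed.

Lemma essential_mulrn H S x : essential_in H S -> S x -> x != 0 ->
  exists2 k, (0 < k)%N & H (x *+ k) /\ x *+ k != 0.
Proof.
move=> [sH [sS [_ essHS]]] Sx x_neq0.
have [|h [Hh [xh /eqP h_neq0]]] := essHS _ (multiples_subgroup x) (multiples_min sS Sx).
  by exists x; split; [apply: multiples_self | apply/eqP].
have [k k_gt0 h_pm] := multiples_neq0 xh h_neq0.
exists k => //; split.
- by apply: subgroup_pm sH Hh _; case: h_pm => ->; [left | right; rewrite opprK].
- by case: h_pm h_neq0 => ->; rewrite ?oppr_eq0.
Qed.

Lemma torsion_in_complement H S C :
  essential_in H S -> internal_direct_sum S C -> torsion_free H ->
  Defs.subset (@finite_order G) C.
Proof.
move=> essHS [sS [sC [SC0 decomp]]] tfH x [n [n_gt0 xn0]].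
have [s [c [Ss [Cc x_eq]]]] := decomp x; rewrite {}x_eq in xn0 *.
have sn0 : s *+ n = 0.
  apply: SC0; first exact: subgroupMn.
  have -> : s *+ n = - (c *+ n) by apply/eqP; rewrite -addr_eq0 -mulrnDl xn0.
  by apply: subgroupN => //; apply: subgroupMn.
have [->|s_neq0] := eqVneq s 0; first by rewrite add0r.
have [k k_gt0 [Hsk /eqP[]]] := essential_mulrn essHS Ss s_neq0.
by apply: (tfH _ Hsk n n_gt0); rewrite mulrnAC sn0 mul0rn.
Qed.

Lemma torsion_divisible y : ~ finite_order y ->
  (forall H, is_subgroup H -> exists S, direct_summand S /\ essential_in H S) ->
  divisible (@finite_order G).
Proof.
move=> y_inf summand_hull t t_tor m m_gt0.
pose z := y *+ m + t.
have z_inf : ~ finite_order z.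
  move=> z_tor; apply/y_inf/(finite_orderMn y m_gt0).
  by rewrite -(addrK t (y *+ m)); apply: subgroupB finite_order_subgroup z_tor t_tor.
have [S [[C dsSC] essHS]] := summand_hull _ (multiples_subgroup z).
have T_C := torsion_in_complement essHS dsSC (multiples_torsion_free z_inf).
have [sS [sC [SC0 decomp]]] := dsSC.
have [s [c [Ss [Cc y_eq]]]] := decomp y.
have cmt0 : c *+ m + t = 0.
  apply: SC0; last by apply: subgroupD => //; [apply: subgroupMn | apply: T_C].
  have -> : c *+ m + t = z - s *+ m.
    by rewrite /z y_eq mulrnDl -(addrA (s *+ m)) [s *+ m + _]addrC addrK.
  apply: subgroupB (subgroupMn _ sS Ss) => //.
  by case: essHS => _ [_ [H_S _]]; apply/H_S/multiples_self.
have cm_eq : c *+ m = - t by apply/eqP; rewrite -addr_eq0 cmt0.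
exists (- c); split.
- apply: subgroupN finite_order_subgroup _; apply/(finite_orderMn c m_gt0).
  by rewrite cm_eq; apply: subgroupN finite_order_subgroup _.
- by rewrite mulNrn cm_eq opprK.
Qed.

Definition subgroup_sum A B : G -> Prop :=
  fun z => exists a b, A a /\ B b /\ z = a + b.

Lemma subgroup_sum_subgroup A B :
  is_subgroup A -> is_subgroup B -> is_subgroup (subgroup_sum A B).
Proof.
move=> sA sB; split.
  by exists 0, 0; split; [exact: subgroup0 | split; [exact: subgroup0 | rewrite addr0]].
move=> _ _ [a [b [Aa [Bb ->]]]] [a' [b' [Aa' [Bb' ->]]]].
exists (a - a'), (b - b'); split; first exact: subgroupB.
by split; [exact: subgroupB | rewrite opprD addrACA].
Qed.

Lemma divisible_subgroup_sum A B :
  divisible A -> divisible B -> divisible (subgroup_sum A B).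
Proof.
move=> dA dB _ [a [b [Aa [Bb ->]]]] n n_gt0.
have [a' [Aa' a'n]] := dA a Aa n n_gt0; have [b' [Bb' b'n]] := dB b Bb n n_gt0.
by exists (a' + b'); split; [exists a', b' | rewrite mulrnDl a'n b'n].
Qed.

Definition divisible_part : G -> Prop :=
  fun x => exists D, is_subgroup D /\ divisible D /\ D x.

Lemma divisible_part_max D :
  is_subgroup D -> divisible D -> Defs.subset D divisible_part.
Proof. by move=> sD dD x Dx; exists D. Qed.

Lemma divisible_part_divisible : divisible divisible_part.
Proof.
move=> d [D [sD [dD Dd]]] n n_gt0; have [e [De en]] := dD d Dd n n_gt0.
by exists e; split=> //; exists D.
Qed.

Lemma divisible_part_subgroup : is_subgroup divisible_part.
Proof.
split.
  exists (fun x => x = 0); split; last by split=> // _ -> n _; exists 0; rewrite mul0rn.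
  by split=> // _ _ -> ->; rewrite subr0.
move=> a b [D1 [sD1 [dD1 D1a]]] [D2 [sD2 [dD2 D2b]]].
exists (subgroup_sum D1 D2); split; first exact: subgroup_sum_subgroup.
split; first exact: divisible_subgroup_sum.
by exists a, (- b); split=> //; split; first exact: subgroupN.
Qed.

Lemma essential_extension_sub D S :
  divisible D -> Defs.subset (@finite_order G) D -> essential_in D S ->
  Defs.subset S D.
Proof.
move=> dD T_D essDS x Sx; have sD : is_subgroup D by case: essDS.
have [->|x_neq0] := eqVneq x 0; first exact: subgroup0.
have [k k_gt0 [Dxk _]] := essential_mulrn essDS Sx x_neq0.
have [e [De ek]] := dD _ Dxk k k_gt0.
have D_xe : D (x - e) by apply: T_D; exists k; rewrite mulrnBl ek subrr.
by rewrite -(subrK e x); apply: subgroupD.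
Qed.

Lemma complement_reduced S C :
  internal_direct_sum S C -> Defs.subset divisible_part S -> reduced C.
Proof.
move=> [_ [_ [SC0 _]]] D_S D sD D_C dD x Dx.
by apply: SC0 (D_C _ Dx); apply/D_S/(divisible_part_max sD dD).
Qed.

Lemma complement_torsion_free S C :
  internal_direct_sum S C -> Defs.subset (@finite_order G) S -> torsion_free C.
Proof. by move=> [_ [_ [SC0 _]]] T_S x Cx n n_gt0 xn0; apply: SC0 Cx; apply: T_S; exists n. Qed.

End MixedGroups.

Theorem corollary2p16 (G : zmodType) :
  mixed_group G ->
  (forall H : G -> Prop, is_subgroup H ->
     exists S : G -> Prop, direct_summand S /\ essential_in H S) ->
  exists D R : G -> Prop,
    internal_direct_sum D R /\ divisible D /\ reduced R /\ torsion_free R.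
Proof.
move=> [_ [y y_inf]] summand_hull.
have T_div := torsion_divisible y_inf summand_hull.
have T_D := divisible_part_max (finite_order_subgroup G) T_div.
have [S [[C dsSC] essDS]] := summand_hull _ (divisible_part_subgroup G).
have S_D := essential_extension_sub (@divisible_part_divisible G) T_D essDS.
have [_ [_ [D_S _]]] := essDS.
exists S, C; split=> //; split; last split.
- move=> d Sd n n_gt0; have [e [De en]] := divisible_part_divisible (S_D d Sd) n_gt0.
  by exists e; split=> //; apply: D_S.
- exact: complement_reduced dsSC D_S.
- by apply: complement_torsion_free dsSC _ => x /T_D /D_S.
Qed.
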